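(* Let $G=(V,E)$ be a transitive and finite directed graph with in-degree at least $2$ at every vertex, let $v\in V$ have in-degree at least $3$, and let $\widehat{G}_v$ be the $v$-lag of $G$. Then the map $\theta$ is a bijection between the set $E^\bullet$ of finite paths of $G$ and the set of finite paths in $\widehat{G}_v$ whose range and source both lie in $V$.
   Context: A directed graph $G=(V,E,r,s)$; in-degree of $v$ is $|r^{-1}(v)|$. $E^\bullet$ denotes the finite paths $\lambda=e_1\cdots e_n$ ($s(e_i)=r(e_{i+1})$), vertices counting as paths of length $0$; ''an edge from $u$ to $w$'' has source $u$, range $w$; $G$ is transitive if there is a path between any two vertices. The $v$-lag $\widehat{G}_v$ at a vertex $v$ of in-degree $d_v\ge3$: enumerate edges with range $v$ as $e_0,\dots,e_{d_v-1}$ with sources $u_0,\dots,u_{d_v-1}$; keep all vertices and all edges not ranging in $v$; add vertices $v_1,\dots,v_{d_v-2}$, an edge $f_1$ from $v_1$ to $v$ and edges $f_i$ from $v_i$ to $v_{i-1}$ ($2\le i\le d_v-2$); replace $e_0$ by $\hat e_0$ from $u_0$ to $v$, $e_j$ by $\hat e_j$ from $u_j$ to $v_j$ ($1\le j\le d_v-2$), and $e_{d_v-1}$ by $\hat e_{d_v-1}$ from $u_{d_v-1}$ to $v_{d_v-2}$. The map $\theta$: $\theta(u)=u$ for $u\in V$ (via $V\subseteq\widehat{V}_v$), $\theta(e)=e$ for $e\in E$ with $r(e)\neq v$, $\theta(e_j)=f_1f_2\cdots f_j\hat e_j$ for $0\le j\le d_v-1$, where for $j=d_v-1$ this means $f_1\cdots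 f_{d_v-2}\hat e_{d_v-1}$ and for $j=0$ just $\hat e_0$; extended to paths by concatenation. *)

From mathcomp Require Import all_boot.
Set Implicit Arguments. Unset Strict Implicit. Unset Printing Implicit Defensive.

(* A finite path is either a vertex (length 0, encoded [inl u]) or a nonempty
   edge sequence e1 ... en (encoded [inr (e1, [:: e2; ...; en])]) with
   s(e_i) = r(e_{i+1}). *)
Definition gpath (V E : Type) := (V + (E * seq E))%type.

Definition is_path (V : eqType) (E : Type) (r s : E -> V) (p : gpath V E) : bool :=
  match p with
  | inl _ => true
  | inr (e, es) => sorted (fun a b => s a == r b) (e :: es)
  end.

Definition prange (V E : Type) (r s : E -> V) (p : gpath V E) : V :=
  match p with inl u => u | inr (e, _) => r e end.

Definition psource (V E : Type) (r s : E -> V) (p : gpath V E) : V :=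
  match p with inl u => u | inr (e, es) => s (last e es) end.

Definition indeg (V E : finType) (r : E -> V) (u : V) : nat := #|[set e | r e == u]|.

Definition transitive_graph (V E : finType) (r s : E -> V) : Prop :=
  forall u w : V, exists p : gpath V E, [/\ is_path r s p, prange r s p = u & psource r s p = w].

(* ---------- the v-lag ----------
   en : 'I_d -> E enumerates the edges e_0, ..., e_{d-1} with range v.
   New vertices v_1..v_{d-2} are [inr k] with k : 'I_(d-2) standing for v_{k+1};
   vertex type is V + 'I_(d-2).
   Edges: [inl e] stands for e itself (if r e <> v) or for \hat e_j (if e = e_j);
   [inr k] stands for f_{k+1}. *)
Section Lag.
Variables (V E : finType) (r s : E -> V) (v : V) (d : nat) (en : 'I_d -> E).

Definition lag_idx (e : E) : nat := index e [seq en j | j <- enum 'I_d].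

(* v_{min(j, d-2)}, with v_0 := v *)
Definition lag_vj (j : nat) : (V + 'I_(d - 2))%type :=
  if j == 0 then inl v
  else match @insub nat (fun n => n < d - 2) 'I_(d - 2) (minn j (d - 2)).-1 with
       | Some k => inr k
       | None => inl v
       end.

Definition lag_r (x : (E + 'I_(d - 2))%type) : (V + 'I_(d - 2))%type :=
  match x with
  | inl e => if r e == v then lag_vj (lag_idx e) else inl (r e)
  | inr k => lag_vj k          (* f_{k+1} ranges in v_k *)
  end.

Definition lag_s (x : (E + 'I_(d - 2))%type) : (V + 'I_(d - 2))%type :=
  match x with
  | inl e => inl (s e)
  | inr k => inr k             (* f_{k+1} has source v_{k+1} *)
  end.

(* theta(e) = e if r e <> v; theta(e_j) = f_1 ... f_{min(j,d-2)} \hat e_j *)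
Definition theta_e (e : E) : seq (E + 'I_(d - 2))%type :=
  if r e == v then
    map (fun k : 'I_(d - 2) => (inr k : (E + 'I_(d - 2))%type))
        (filter (fun k : 'I_(d - 2) => k < lag_idx e) (enum 'I_(d - 2)))
      ++ [:: inl e]
  else [:: inl e].

Definition theta (p : gpath V E) : gpath (V + 'I_(d - 2)) (E + 'I_(d - 2)) :=
  match p with
  | inl u => inl (inl u)
  | inr (e, es) =>
      match flatten [seq theta_e x | x <- e :: es] with
      | x :: xs => inr (x, xs)
      | [::] => inl (inl v)  (* unreachable: theta_e is never empty *)
      end
  end.

End Lag.

Definition in_V (V : Type) (n : nat) (x : (V + 'I_n)%type) : bool :=
  if x is inl _ then true else false.

From mathcomp Require Import all_boot.
From mathcomp Require Import zify.
Set Implicit Arguments. Unset Strict Implicit. Unset Printing Implicit Defensive.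

(* In the v-lag, f_1 ... f_k is the only path of f-edges with range v and
   source v_k, and theta e is that path (for the v_k that the copy of e ranges
   in) followed by the copy of e.  Erasing the f-edges is therefore a left
   inverse of theta.  Conversely, in a lag path whose source lies in V, every
   f-edge is followed by an f-edge or a copied edge, so each run of f-edges is
   such a chain, cut off at its range end only if it starts the path; when the
   range also lies in V, the path is exactly theta of its erasure. *)

Lemma sorted_rcons2 (T : Type) (R : rel T) s a b :
  sorted R (rcons (rcons s a) b) = sorted R (rcons s a) && R a b.
Proof. by case: s => [|x s] /=; rewrite ?andbT // !rcons_path last_rcons. Qed.

Section Lag.
Variables (V E : finType) (r s : E -> V) (v : V) (d : nat) (en : 'I_d -> E).

Local Notation edge := (E + 'I_(d - 2))%type.
Local Notation vertex := (V + 'I_(d - 2))%type.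
Local Notation lr := (lag_r r v en).
Local Notation ls := (lag_s s (d := d)).
Local Notation vj := (lag_vj v d).
Local Notation adj := (fun a b : edge => ls a == lr b).

Definition fchain (n : nat) : seq edge :=
  [seq inr k | k : 'I_(d - 2) <- [seq k : 'I_(d - 2) <- enum 'I_(d - 2) | k < n]].

Definition chain_to (w : vertex) : seq edge :=
  if w is inr k then fchain k.+1 else [::].

Definition unlag (q : seq edge) : seq E :=
  pmap (fun x : edge => if x is inl e then Some e else None) q.

Definition theta_seq (p : seq E) : seq edge := flatten [seq theta_e r v en e | e <- p].

Lemma fchain0 : fchain 0 = [::].
Proof. by rewrite /fchain; elim: (enum _) => //= k l; rewrite ltn0. Qed.

Lemma val_filter_enum_ord_ltn m n :
  [seq val k | k <- [seq k : 'I_m <- enum 'I_m | k < n]] = iota 0 (minn n m).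
Proof.
rewrite -(filter_map val (fun i => i < n)) val_enum_ord.
have [le_nm|lt_mn] := leqP n m.
  exact: (filter_iota_ltn 0).
rewrite -[RHS]filter_predT; apply: eq_in_filter => i.
by rewrite mem_iota => /andP[_ /ltn_trans->].
Qed.

Lemma fchainS (k : 'I_(d - 2)) : fchain k.+1 = rcons (fchain k) (inr k).
Proof.
rewrite /fchain -map_rcons; congr map; apply: (inj_map val_inj).
rewrite map_rcons !val_filter_enum_ord_ltn.
rewrite !(minn_idPl _) ?ltn_ord ?(ltnW (ltn_ord k)) //.
by rewrite -addn1 iotaD cats1.
Qed.

Lemma chain_to_vj j : chain_to (vj j) = fchain j.
Proof.
rewrite /lag_vj; case: eqP => [->|/eqP]; first by rewrite fchain0.
rewrite -lt0n => j_gt0.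
case: insubP => [k _ kE|not_lt] /=.
  have lt_k := ltn_ord k; have {}kE : nat_of_ord k = _ := kE.
  by congr map; apply: eq_filter => i /=; have lt_i := ltn_ord i; apply/idP/idP; lia.
by rewrite /fchain (size0nil (_ : size (enum 'I_(d - 2)) = 0)) // size_enum_ord; lia.
Qed.

Lemma lag_vjS k (lt_k : k < d - 2) : vj k.+1 = inr (Ordinal lt_k).
Proof.
rewrite /lag_vj /=; case: insubP => [k' _ kE|/negP[]]; last by lia.
by congr inr; apply: val_inj; rewrite /= kE; lia.
Qed.

Lemma lag_vj_inl j u : vj j = inl u -> u = v.
Proof.
rewrite /lag_vj; case: eqP => _; first by case.
by case: insubP => [k _ _|_] // [].
Qed.

Lemma chain_to_sorted w y : lr y = w -> sorted adj (rcons (chain_to w) y).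
Proof.
case: w => [//|[k lt_k]] /= yE.
elim: k lt_k y yE => [|k IHk] lt_k y yE.
  by rewrite (fchainS (Ordinal lt_k)) fchain0 /= yE.
rewrite (fchainS (Ordinal lt_k)) sorted_rcons2 yE eqxx andbT.
apply: (IHk (ltnW lt_k)); exact: lag_vjS.
Qed.

Lemma chain_to_range w x y : lr y = w ->
  lr (head x (rcons (chain_to w) y)) = if w is inl _ then w else inl v.
Proof.
case: w => [//|k] _ /=.
have := val_filter_enum_ord_ltn (d - 2) k.+1; rewrite (minn_idPl _) ?ltn_ord //.
by rewrite /fchain; case: [seq _ <- _ | _] => [|i l] //= [i0 _]; rewrite /lag_r i0.
Qed.

Lemma theta_eE e : theta_e r v en e = rcons (chain_to (lr (inl e))) (inl e).
Proof. by rewrite /theta_e /lag_r; case: ifP; rewrite ?chain_to_vj -?cats1. Qed.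

Lemma theta_e_sorted e : sorted adj (theta_e r v en e).
Proof. by rewrite theta_eE; apply: chain_to_sorted. Qed.

Lemma theta_e_range e y : lr (head y (theta_e r v en e)) = inl (r e).
Proof.
rewrite theta_eE chain_to_range //; move rE: (lr (inl e)) => w; rewrite /lag_r in rE.
case: eqP rE => [ev|_ <-] //.
by case: w => [u /lag_vj_inl ->|k _]; rewrite ev.
Qed.

Lemma theta_e_last e y : last y (theta_e r v en e) = inl e.
Proof. by rewrite theta_eE last_rcons. Qed.

Lemma theta_e_nonnil e : exists x t, theta_e r v en e = x :: t.
Proof. by rewrite theta_eE; case: (chain_to _) => [|x t] /=; do 2!eexists. Qed.

Lemma theta_seq_cons e es : theta_seq (e :: es) = theta_e r v en e ++ theta_seq es.
Proof. by []. Qed.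

Lemma theta_seq_nonnil e es : exists x t, theta_seq (e :: es) = x :: t.
Proof.
have [x [t et]] := theta_e_nonnil e.
by exists x, (t ++ theta_seq es); rewrite theta_seq_cons et.
Qed.

Lemma theta_seq_range e es y : lr (head y (theta_seq (e :: es))) = inl (r e).
Proof.
have [x [t et]] := theta_e_nonnil e.
by rewrite theta_seq_cons et /= -(theta_e_range e y) et.
Qed.

Lemma theta_seq_last e es y : last y (theta_seq (e :: es)) = inl (last e es).
Proof.
elim: es e y => [|e' es IHes] e y.
  by rewrite theta_seq_cons cats0 theta_e_last.
by rewrite theta_seq_cons last_cat IHes.
Qed.

Lemma theta_seq_sorted e es :
  sorted adj (theta_seq (e :: es)) = sorted (fun a b => s a == r b) (e :: es).
Proof.
elim: es e => [|e' es IHes] e.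
  by rewrite theta_seq_cons cats0 theta_e_sorted.
have [x [t et]] := theta_e_nonnil e; have [y [u tu]] := theta_seq_nonnil e' es.
have sorted_xt : path adj x t by have := theta_e_sorted e; rewrite et.
have last_xt : last x t = inl e by have := theta_e_last e x; rewrite et.
have range_y : lr y = inl (r e') by have := theta_seq_range e' es y; rewrite tu.
move: (IHes e'); rewrite tu theta_seq_cons et tu /= cat_path sorted_xt last_xt /=.
by rewrite range_y => ->; rewrite (inj_eq inl_inj).
Qed.

Lemma unlag_chain_to w : unlag (chain_to w) = [::].
Proof. by case: w => //= k; rewrite /fchain; elim: (filter _ _). Qed.

Lemma unlag_theta_seq : cancel theta_seq unlag.
Proof.
elim=> [|e p IHp] //; rewrite theta_seq_cons theta_eE -cats1 /unlag !pmap_cat.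
by rewrite -/(unlag (theta_seq p)) IHp -/(unlag (chain_to _)) unlag_chain_to.
Qed.

Lemma theta_seq_unlag x xs : sorted adj (x :: xs) -> in_V (ls (last x xs)) ->
  theta_seq (unlag (x :: xs)) = chain_to (lr x) ++ x :: xs.
Proof.
elim: xs x => [|y ys IHys] x.
  by case: x => [e|//] _ _; rewrite theta_seq_cons cats0 theta_eE cats1.
move=> /andP[/eqP xy sorted_ys] inV_last.
have {inV_last} := IHys y sorted_ys inV_last; rewrite -{}xy.
case: x => [e|k] IH.
  have -> : unlag [:: inl e, y & ys] = e :: unlag (y :: ys) by [].
  by rewrite theta_seq_cons IH theta_eE cat_rcons.
have -> : unlag [:: inr k, y & ys] = unlag (y :: ys) by [].
rewrite IH (fchainS k : chain_to (ls (inr k)) = _).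
by rewrite (chain_to_vj k : chain_to (lr (inr k)) = _) cat_rcons.
Qed.

Lemma theta_inrE e es : theta r v en (inr (e, es)) =
  if theta_seq (e :: es) is x :: xs then inr (x, xs) else inl (inl v).
Proof. by []. Qed.

Lemma theta_path p : is_path r s p ->
  [/\ is_path lr ls (theta r v en p),
      in_V (prange lr ls (theta r v en p)) &
      in_V (psource lr ls (theta r v en p))].
Proof.
case: p => [//|[e es]] p_path; have [x [t tE]] := theta_seq_nonnil e es.
rewrite theta_inrE tE; split.
- by rewrite -[is_path _ _ _]/(sorted _ (x :: t)) -tE theta_seq_sorted.
- by have := theta_seq_range e es x; rewrite tE /= => ->.
- by have := theta_seq_last e es x; rewrite tE /= => ->.
Qed.

Lemma theta_inj : injective (theta r v en).
Proof.
case=> [u1|[e1 es1]] [u2|[e2 es2]]; rewrite ?theta_inrE; first by case=> ->.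
- by have [x [t ->]] := theta_seq_nonnil e2 es2.
- by have [x [t ->]] := theta_seq_nonnil e1 es1.
have [x1 [t1 E1]] := theta_seq_nonnil e1 es1.
have [x2 [t2 E2]] := theta_seq_nonnil e2 es2.
rewrite E1 E2 => -[x12 t12]; move: E1; rewrite x12 t12 -E2.
by case/(can_inj unlag_theta_seq) => -> ->.
Qed.

Lemma theta_onto q : is_path lr ls q ->
  in_V (prange lr ls q) -> in_V (psource lr ls q) ->
  exists2 p, is_path r s p & theta r v en p = q.
Proof.
case: q => [[u|//] _ _ _|[x xs] /= q_path range_x inV_last]; first by exists (inl u).
have := theta_seq_unlag q_path inV_last.
have -> : chain_to (lr x) = [::] by case: (lr x) range_x.
case: (unlag (x :: xs)) => [//|e es] q_theta.
exists (inr (e, es)).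
  by rewrite -[is_path _ _ _]/(sorted _ (e :: es)) -theta_seq_sorted q_theta.
by rewrite theta_inrE q_theta.
Qed.

End Lag.

Theorem lemma3p7 (V E : finType) (r s : E -> V) (v : V) (d : nat) (en : 'I_d -> E) :
  transitive_graph r s ->
  (forall u : V, 2 <= indeg r u) ->
  3 <= indeg r v ->
  injective en ->
  (forall e : E, r e = v <-> exists j : 'I_d, en j = e) ->
  let Ghat_r := lag_r r v en in
  let Ghat_s := lag_s s (d := d) in
  let th := theta r v en in
  [/\ (forall p : gpath V E, is_path r s p ->
         [/\ is_path Ghat_r Ghat_s (th p),
             in_V (prange Ghat_r Ghat_s (th p)) &
             in_V (psource Ghat_r Ghat_s (th p))]),
      {in [pred p | is_path r s p] &, injective th} &
      (forall q, is_path Ghat_r Ghat_s q ->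
         in_V (prange Ghat_r Ghat_s q) -> in_V (psource Ghat_r Ghat_s q) ->
         exists2 p, is_path r s p & th p = q)].
Proof.
move=> _ _ _ _ _ /=; split; first exact: theta_path.
- by move=> p1 p2 _ _; apply: theta_inj.
- exact: theta_onto.
Qed.
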